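(* Let $\varphi:\mathbb{R}^n\to(-\infty,\infty]$ be prox-regular at $\bar x$ for $0\in\partial\varphi(\bar x)$, and let $\bar x$ be a strong local minimizer of $\varphi$ with modulus $\sigma>0$. Then $$\langle z,w\rangle\ge\sigma\|w\|^2\quad\text{for all } w\in\mathbb{R}^n,\ z\in\breve\partial^2\varphi(\bar x,0)(w),$$ and consequently $\langle z,w\rangle>0$ for all $w\in\mathbb{R}^n\setminus\{0\}$ and $z\in\breve\partial^2\varphi(\bar x,0)(w)$.
   Context: $\bar x\in\operatorname{dom}\varphi$ is a strong local minimizer with modulus $\sigma>0$ if $\varphi(x)\ge\varphi(\bar x)+\frac\sigma2\|x-\bar x\|^2$ for all $x$ in a neighborhood of $\bar x$. Standard regular/limiting subdifferentials and coderivatives; $\breve\partial^2\varphi(\bar x,\bar v)(u):=\widehat D^*(\partial\varphi)(\bar x,\bar v)(u)$ where $\widehat D^*F(\bar x,\bar y)(u):=\{v:(v,-u)\in\widehat N_{\operatorname{gph}F}(\bar x,\bar y)\}$. Prox-regularity at $\bar x$ for $\bar v$: $\varphi$ finite and locally l.s.c. around $\bar x$ and there exist $\varepsilon>0,r\ge0$ with $\varphi(x)\ge\varphi(u)+\langle v,x-u\rangle-\frac r2\|x-u\|^2$ for all $\|x-\bar x\|<\varepsilon$, $v\in\partial\varphi(u)$, $\|v-\bar v\|<\varepsilon$, $\|u-\bar x\|<\varepsilon$, $\varphi(u)<\varphi(\bar x)+\varepsilon$. *)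

From HB Require Import structures.
From mathcomp Require Import all_boot all_order all_algebra.
From mathcomp Require Import all_classical all_reals all_analysis.
Set Implicit Arguments. Unset Strict Implicit. Unset Printing Implicit Defensive.
Import Order.TTheory GRing.Theory Num.Theory.
Import numFieldNormedType.Exports.
Local Open Scope classical_set_scope.
Local Open Scope ring_scope.

Section Defs.
Variables (R : realType) (n : nat).
Implicit Types (x u v w y : 'rV[R]_n) (phi : 'rV[R]_n -> \bar R).

Definition dotp (u v : 'rV[R]_n) : R := \sum_(i < n) u ord0 i * v ord0 i.
Definition enorm (u : 'rV[R]_n) : R := Num.sqrt (dotp u u).

Definition lsc_at phi x : Prop :=
  forall a : R, (a%:E < phi x)%E -> \forall z \near x, (a%:E < phi z)%E.

Definition locally_lsc phi (xb : 'rV[R]_n) : Prop :=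
  exists2 d : R, 0 < d & forall x, enorm (x - xb) < d -> lsc_at phi x.

(* regular (Frechet) subdifferential:
   liminf_{u -> x} (phi u - phi x - <v,u-x>)/|u-x| >= 0, unfolded *)
Definition reg_subdiff phi x : set 'rV[R]_n :=
  [set v | phi x \is a fin_num /\
     forall eps : R, 0 < eps -> exists2 d : R, 0 < d &
       forall u, enorm (u - x) < d ->
         (phi x + (dotp v (u - x) - eps * enorm (u - x))%:E <= phi u)%E].

Definition lim_subdiff phi x : set 'rV[R]_n :=
  [set v | exists (xk vk : nat -> 'rV[R]_n),
     [/\ xk k @[k --> \oo] --> x,
         phi (xk k) @[k --> \oo] --> phi x,
         (forall k, reg_subdiff phi (xk k) (vk k)) &
         vk k @[k --> \oo] --> v]].

(* regular normal cone to the graph of a set-valued map F at (xb, yb):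
   (a, b) such that limsup_{(x,y) -> (xb,yb), (x,y) in gph F}
   (<a, x - xb> + <b, y - yb>) / |(x,y) - (xb,yb)| <= 0,
   with the Euclidean norm on R^n x R^n *)
Definition reg_normal_graph (F : 'rV[R]_n -> set 'rV[R]_n) (xb yb a b : 'rV[R]_n)
  : Prop :=
  F xb yb /\
  forall eps : R, 0 < eps -> exists2 d : R, 0 < d &
    forall x y, F x y ->
      Num.sqrt (dotp (x - xb) (x - xb) + dotp (y - yb) (y - yb)) < d ->
      dotp a (x - xb) + dotp b (y - yb) <=
        eps * Num.sqrt (dotp (x - xb) (x - xb) + dotp (y - yb) (y - yb)).

Definition reg_coderiv (F : 'rV[R]_n -> set 'rV[R]_n) (xb yb u : 'rV[R]_n)
  : set 'rV[R]_n := [set v | reg_normal_graph F xb yb v (- u)].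

Definition breve_subdiff2 phi (xb vb u : 'rV[R]_n) : set 'rV[R]_n :=
  reg_coderiv (lim_subdiff phi) xb vb u.

Definition prox_regular phi (xb vb : 'rV[R]_n) : Prop :=
  phi xb \is a fin_num /\ locally_lsc phi xb /\
  exists eps : R, exists r : R, [/\ 0 < eps, 0 <= r &
    forall x u v, enorm (x - xb) < eps -> lim_subdiff phi u v ->
      enorm (v - vb) < eps -> enorm (u - xb) < eps ->
      (phi u < phi xb + eps%:E)%E ->
      (phi u + (dotp v (x - u) - r / 2 * enorm (x - u) ^+ 2)%:E <= phi x)%E].

Definition strong_local_min phi (xb : 'rV[R]_n) (sigma : R) : Prop :=
  phi xb \is a fin_num /\
  exists2 d : R, 0 < d & forall x, enorm (x - xb) < d ->
    (phi xb + (sigma / 2 * enorm (x - xb) ^+ 2)%:E <= phi x)%E.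

End Defs.

(* Fix z in the regular coderivative of the limiting subdifferential at
   (xb, 0) in direction w, and lam > 0.  Follow the Moreau envelope of phi
   with parameter lam, localized to a small ball around xb, along the ray
   xb + t u with u = -(w + lam z).  The strong minimum bounds it below by
   phi(xb) + a t^2 / 2 with a = sigma |u|^2 / (1 + lam sigma), and it is
   semiconcave with modulus c = |u|^2 / lam, its supergradients coming from
   the proximal residual; telescoping then gives arbitrarily small t at which
   this slope is at least (a - eps) t.  There the proximal point p and
   v = (xb + t u - p) / lam form a regular, hence limiting, subgradient pair
   within O(t) of (xb, 0), and testing the coderivative inequality on it gives
   a <= <z, w> + lam |z|^2 + eps.  Letting eps, then lam, go to 0 yields
   sigma |w|^2 <= <z, w>. *)

From mathcomp Require Import all_boot all_order all_algebra.
From mathcomp Require Import all_classical all_reals all_analysis.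
From mathcomp Require Import ring lra.
Import Order.TTheory GRing.Theory Num.Theory.
Import numFieldNormedType.Exports.
Local Open Scope classical_set_scope.
Local Open Scope ring_scope.
Set Implicit Arguments. Unset Strict Implicit.

Lemma lsc_compact_attains_min (R : realType) (T : topologicalType) (K : set T)
    (f : T -> \bar R) :
  compact K -> K !=set0 -> (forall y, f y != -oo%E) ->
  (forall x, K x -> forall a : R, (a%:E < f x)%E ->
     \forall z \near x, (a%:E < f z)%E) ->
  exists2 p, K p & forall q, K q -> (f p <= f q)%E.
Proof.
move=> cK [k0 Kk0] fN lsc; apply: contrapT => nomin.
have lower p : K p -> exists2 q, K q & (f q < f p)%E.
  move=> Kp; apply: contrapT => nolower; apply: nomin; exists p => // q Kq.
  by rewrite leNgt; apply/negP => fqp; apply: nolower; exists q.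
pose below q := [set y | K y /\ (f y < f q)%E].
have below_filter : ProperFilter (filter_from K below).
  apply: filter_from_proper; last first.
    by move=> i Ki; have [q Kq fq] := lower i Ki; exists q.
  apply: filter_from_filter; first by exists k0.
  move=> i j Ki Kj; have [fij|fji] := leP (f i) (f j).
    by exists i => // y [Ky fy]; split; split => //; exact: lt_le_trans fij.
  by exists j => // y [Ky fy]; split; split => //; exact: lt_trans fji.
have [x [Kx clx]] := cK _ below_filter
  (ex_intro2 _ _ k0 Kk0 (fun y (h : below k0 y) => h.1)).
have [q Kq fqx] := lower x Kx.
have fq_fin : f q \is a fin_num.
  by rewrite fin_numE fN /= lt_eqF // (lt_le_trans fqx) ?leey.
have := lsc x Kx (fine (f q)); rewrite fineK // => /(_ fqx) near_x.
have [y [[_ fyq] /= fqy]] := clx _ _ (@in_filter_from _ _ K below q Kq) near_x.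
by move: (lt_trans fyq fqy); rewrite ltxx.
Qed.

Section EuclideanProduct.
Variables (R : realType) (n : nat).
Implicit Types (u v w : 'rV[R]_n).

Lemma dotpC u v : dotp u v = dotp v u.
Proof. by apply: eq_bigr => i _; rewrite mulrC. Qed.

Lemma dotpDl u v w : dotp (u + v) w = dotp u w + dotp v w.
Proof. by rewrite /dotp -big_split; apply: eq_bigr => i _; rewrite mxE mulrDl. Qed.

Lemma dotpDr u v w : dotp w (u + v) = dotp w u + dotp w v.
Proof. by rewrite dotpC dotpDl !(dotpC w). Qed.

Lemma dotpZl a u v : dotp (a *: u) v = a * dotp u v.
Proof. by rewrite /dotp mulr_sumr; apply: eq_bigr => i _; rewrite mxE mulrA. Qed.

Lemma dotpZr a u v : dotp v (a *: u) = a * dotp v u.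
Proof. by rewrite dotpC dotpZl dotpC. Qed.

Lemma dotpNl u v : dotp (- u) v = - dotp u v.
Proof. by rewrite -scaleN1r dotpZl mulN1r. Qed.

Lemma dotpNr u v : dotp v (- u) = - dotp v u.
Proof. by rewrite dotpC dotpNl dotpC. Qed.

Lemma dotpBr u v w : dotp w (u - v) = dotp w u - dotp w v.
Proof. by rewrite dotpDr dotpNr. Qed.

Lemma dotp_sqrD u v : dotp (u + v) (u + v) = dotp u u + 2 * dotp u v + dotp v v.
Proof. by rewrite dotpDl !dotpDr (dotpC v u); ring. Qed.

Lemma dotp_sqrZ a u : dotp (a *: u) (a *: u) = a ^+ 2 * dotp u u.
Proof. by rewrite dotpZl dotpZr mulrA expr2. Qed.

Lemma dotp_ge0 u : 0 <= dotp u u.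
Proof. by apply: sumr_ge0 => i _; rewrite -expr2 sqr_ge0. Qed.

Lemma enorm_sqr u : enorm u ^+ 2 = dotp u u.
Proof. by rewrite /enorm sqr_sqrtr // dotp_ge0. Qed.

Lemma enorm_ge0 u : 0 <= enorm u.
Proof. exact: sqrtr_ge0. Qed.

Lemma normr_coord_le u i : `|u ord0 i| <= `|u|.
Proof.
change (`|u ord0 i| <= mx_norm u); rewrite mx_normrE.
by apply/bigmax_geP; right; exists (ord0, i).
Qed.

Lemma normr_dotp_le u v : `|dotp u v| <= n%:R * (`|u| * `|v|).
Proof.
apply: le_trans (ler_norm_sum _ _ _) _.
rewrite -[X in X%:R]card_ord mulr_natl -sumr_const.
by apply: ler_sum => i _; rewrite normrM ler_pM ?normr_coord_le.
Qed.

Lemma dotp_le_sqr_normr u : dotp u u <= n%:R * `|u| ^+ 2.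
Proof. by rewrite expr2; apply: le_trans (normr_dotp_le u u); apply: ler_norm. Qed.

Lemma normr_le_enorm u : `|u| <= enorm u.
Proof.
change (mx_norm u <= enorm u); rewrite mx_normrE.
apply: bigmax_le; first exact: enorm_ge0.
case=> i j _ /=; rewrite (ord1 i) -[`|u ord0 j|]sqrtr_sqr ler_wsqrtr //.
rewrite /dotp (bigD1 j) //= -expr2 lerDl.
by apply: sumr_ge0 => k _; rewrite -expr2 sqr_ge0.
Qed.

Lemma enorm_gt0 u : u != 0 -> 0 < enorm u.
Proof. by move=> u0; apply: lt_le_trans (normr_le_enorm u); rewrite normr_gt0. Qed.

Lemma mx_ball_sub_enorm_ball (d : R) : 0 < d ->
  exists2 rho, 0 < rho & forall u, `|u| <= rho -> enorm u < d.
Proof.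
move=> d0; have n1 : 0 < n%:R + 1 :> R by rewrite ltr_wpDl.
exists (d / (n%:R + 1)) => [|u u_le]; first by rewrite divr_gt0.
rewrite -(ltr_pXn2r (n := 2)) ?nnegrE ?enorm_ge0 ?ltW // enorm_sqr.
apply: le_lt_trans (dotp_le_sqr_normr u) _.
have u2 : `|u| ^+ 2 <= (d / (n%:R + 1)) ^+ 2.
  by rewrite !expr2 ler_pM ?normr_ge0.
apply: le_lt_trans (ler_wpM2l (ler0n _ _) u2) _.
rewrite expr_div_n mulrA ltr_pdivrMr ?exprn_gt0 // mulrC ltr_pM2l ?exprn_gt0 //.
have n0 : 0 <= n%:R :> R by [].
nra.
Qed.

End EuclideanProduct.

Section LargeSlope.
Variables (R : realType) (E V : R -> R) (e0 a c : R).
Hypothesis E_lb : forall t, 0 < t -> e0 + a / 2 * t ^+ 2 <= E t.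
Hypothesis E_step : forall t s, 0 < t -> 0 < s ->
  E s <= E t + V t * (s - t) + c / 2 * (s - t) ^+ 2.
Hypothesis E_ub : forall s, 0 < s -> E s <= e0 + c / 2 * s ^+ 2.

Lemma value_on_grid_le (b D : R) (k : nat) : 0 < D ->
  (forall j, (j < k)%N -> V (j.+1%:R * D) <= b * (j.+1%:R * D)) ->
  E (k.+1%:R * D) <= e0 + b * D ^+ 2 * (k.+1%:R * k%:R / 2) + c / 2 * D ^+ 2 * k.+1%:R.
Proof.
move=> D0; elim: k => [_|k IH slope_le].
  by rewrite mul1r mulr0 mul0r mulr0 addr0 mulr1; apply: E_ub.
have jD0 (j : nat) : 0 < j.+1%:R * D by rewrite mulr_gt0 ?ltr0n.
have := E_step (jD0 k) (jD0 k.+1).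
have := IH (fun j jk => slope_le j (ltnW jk)).
have := slope_le k (ltnSn k).
rewrite -[k.+2]addn1 -[k.+1]addn1 !natrD.
have k0 : 0 <= k%:R :> R by [].
have : D ^+ 2 = D * D by rewrite expr2.
nra.
Qed.

Lemma exists_large_slope (eps T : R) : 0 < eps -> 0 < T ->
  exists2 t, 0 < t /\ t <= T & (a - eps) * t <= V t.
Proof.
(* Otherwise summing the steps along the grid j * T / (M + 1) would give
   a (M + 1) <= (a - eps) M + c, which fails as soon as M eps > c - a. *)
move=> eps0 T0; apply: contrapT => noslope.
have slope_lt t : 0 < t -> t <= T -> V t < (a - eps) * t.
  move=> t0 tT; rewrite ltNge; apply/negP => Vt; apply: noslope; by exists t.
pose M := Num.Def.archi_bound (`|c - a| / eps).
have M_gt : `|c - a| / eps < M%:R by rewrite archi_boundP // divr_ge0 // ltW.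
pose D := T / M.+1%:R.
have D0 : 0 < D by rewrite divr_gt0.
have MD : M.+1%:R * D = T by rewrite mulrC divfK.
have grid : E T <= e0 + (a - eps) * D ^+ 2 * (M.+1%:R * M%:R / 2) + c / 2 * D ^+ 2 * M.+1%:R.
  rewrite -MD; apply: value_on_grid_le => // j jM; apply: ltW; apply: slope_lt.
    by rewrite mulr_gt0 ?ltr0n.
  by rewrite -MD ler_pM2r // ler_nat ltnS ltnW.
have := le_trans (E_lb T0) grid; rewrite -MD -[M.+1]addn1 natrD.
have ca_lt : c - a < M%:R * eps.
  by apply: le_lt_trans (ler_norm _) _; rewrite -ltr_pdivrMr.
have gap : 0 < a + eps * M%:R - c by lra.
have : 0 < D ^+ 2 * (M%:R + 1) * (a + eps * M%:R - c).
  by rewrite !mulr_gt0 ?exprn_gt0 // ltr_wpDl.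
lra.
Qed.

End LargeSlope.

Lemma reg_subdiff_lim_subdiff (R : realType) (n : nat) (phi : 'rV[R]_n -> \bar R)
    (x v : 'rV[R]_n) :
  reg_subdiff phi x v -> lim_subdiff phi x v.
Proof. by move=> xv; exists (fun=> x), (fun=> v); split; try exact: cvg_cst. Qed.

Section LocalMoreauEnvelope.
Variables (R : realType) (n : nat) (phi : 'rV[R]_n -> \bar R) (xb : 'rV[R]_n).
Variables (phi0 sigma rho lam : R).
Hypotheses (phi_xb : phi xb = phi0%:E) (phi_neqNy : forall x, phi x != -oo%E).
Hypotheses (sigma_gt0 : 0 < sigma) (rho_gt0 : 0 < rho) (lam_gt0 : 0 < lam).
Hypothesis phi_strong_min : forall q, `|q - xb| <= rho ->
  ((phi0 + sigma / 2 * dotp (q - xb) (q - xb))%:E <= phi q)%E.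
Hypothesis phi_lsc : forall q, `|q - xb| <= rho -> lsc_at phi q.

Definition prox_cost (x q : 'rV[R]_n) := dotp (x - q) (x - q) / (2 * lam).

(* The ball is taken for the sup norm [`|_|] of the topology on 'rV, where
   compactness makes proximal points exist. *)
Definition is_local_prox x p := `|p - xb| <= rho /\
  forall q, `|q - xb| <= rho ->
    (phi p + (prox_cost x p)%:E <= phi q + (prox_cost x q)%:E)%E.

Lemma prox_costD x h q : prox_cost (x + h) q =
  prox_cost x q + dotp (x - q) h / lam + dotp h h / (2 * lam).
Proof.
rewrite /prox_cost (addrAC x) (dotp_sqrD (x - q) h).
by field; rewrite gt_eqF.
Qed.

Lemma prox_cost_ge x q z :
  prox_cost x q - n%:R * (`|x - q| * `|q - z|) / lam <= prox_cost x z.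
Proof.
rewrite /prox_cost.
have -> : x - z = (x - q) + (q - z) by rewrite addrA subrK.
rewrite (dotp_sqrD (x - q)).
have := normr_dotp_le (x - q) (q - z); rewrite ler_norml => /andP[+ _].
have := dotp_ge0 (q - z).
have lam2 : 0 < 2 * lam by rewrite mulr_gt0.
set A := dotp (x - q) (x - q); set B := dotp (x - q) (q - z).
set C := dotp (q - z) _ => C0 cross_ge.
have -> : forall P, A / (2 * lam) - P / lam = (A - 2 * P) / (2 * lam).
  by move=> P; field; rewrite gt_eqF.
by rewrite ler_pM2r ?invr_gt0 //; lra.
Qed.

Lemma lsc_at_phiD_prox_cost x q : `|q - xb| <= rho -> forall a : R,
  (a%:E < phi q + (prox_cost x q)%:E)%E ->
  \forall z \near q, (a%:E < phi z + (prox_cost x z)%:E)%E.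
Proof.
move=> q_in a a_lt.
have [b [eta [eta0 b_lt ->]]] : exists b eta, [/\ 0 < eta, (b%:E < phi q)%E &
    a = b + prox_cost x q - eta].
  move: a_lt; case: (phi q) (phi_neqNy q) => [r| |] // _.
    rewrite -EFinD lte_fin => a_lt.
    exists (r - (r + prox_cost x q - a) / 2), ((r + prox_cost x q - a) / 2).
    by split; [rewrite divr_gt0 // subr_gt0 | rewrite lte_fin; lra | field].
  by move=> _; exists (a - prox_cost x q + 1), 1; split; [exact: ltr01 | rewrite ltry | ring].
pose d := eta * lam / (n%:R * `|x - q| + 1).
have d_den : 0 < n%:R * `|x - q| + 1 by rewrite ltr_wpDl // mulr_ge0.
have d0 : 0 < d by rewrite divr_gt0 // mulr_gt0.
apply: filterS2 (phi_lsc q_in b_lt) (nbhsx_ballx q d d0) => z b_lt_z.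
rewrite -ball_normE /= => qz_lt.
have cost_gt : prox_cost x q - eta < prox_cost x z.
  apply: lt_le_trans (prox_cost_ge x q z).
  rewrite ltrD2l ltrN2 ltr_pdivrMr //.
  apply: le_lt_trans (_ : (n%:R * `|x - q| + 1) * `|q - z| < _).
    by rewrite mulrA mulrDl mul1r lerDl normr_ge0.
  by rewrite mulrC -ltr_pdivlMr // mulrC.
move: b_lt_z; case: (phi z) => [s| |] //.
  by rewrite !lte_fin => ?; lra.
by move=> _; rewrite addye // ltry.
Qed.

Lemma xb_in_ball : `|xb - xb| <= rho.
Proof. by rewrite subrr normr0 ltW. Qed.

Lemma exists_local_prox x : exists p, is_local_prox x p.
Proof.
pose K := closed_ball xb rho.
have KE q : K q <-> `|q - xb| <= rho by rewrite /K closed_ballE //= distrC.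
have K_compact : compact K.
  apply: bounded_closed_compact; last by rewrite /K closed_ballE //; exact: closed_closed_ball_.
  suff K_bounded : [bounded y | y in K] by exact: K_bounded.
  rewrite /bounded_near; near=> M => y /KE y_in /=.
  have : `|y| <= `|xb| + rho.
    rewrite -[y](subrK xb) addrC; apply: le_trans (ler_normD _ _) _.
    by rewrite lerD2l.
  by move/le_trans; apply; near: M; apply: nbhs_pinfty_ge; exact: num_real.
have K0 : K !=set0 by exists xb; apply/KE; exact: xb_in_ball.
have f_neqNy y : phi y + (prox_cost x y)%:E != -oo%E.
  by case: (phi y) (phi_neqNy y) => [r| |].
have f_lsc q : K q -> forall a : R, (a%:E < phi q + (prox_cost x q)%:E)%E ->
    \forall z \near q, (a%:E < phi z + (prox_cost x z)%:E)%E.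
  by move=> /KE; exact: lsc_at_phiD_prox_cost.
have [p /KE p_in p_min] := lsc_compact_attains_min K_compact K0 f_neqNy f_lsc.
by exists p; split => // q /KE; exact: p_min.
Unshelve. all: by end_near.
Qed.

Section LocalProx.
Variables (x p : 'rV[R]_n).
Hypothesis p_prox : is_local_prox x p.

Lemma local_prox_phiE : phi p = (fine (phi p))%:E.
Proof.
have := p_prox.2 _ xb_in_ball; rewrite phi_xb.
by case: (phi p) (phi_neqNy p) => [r| |].
Qed.

Lemma local_prox_le_center : fine (phi p) + prox_cost x p <= phi0 + prox_cost x xb.
Proof.
by have := p_prox.2 _ xb_in_ball; rewrite phi_xb local_prox_phiE -!EFinD lee_fin.
Qed.

Lemma local_prox_strong_min : phi0 + sigma / 2 * dotp (p - xb) (p - xb) <= fine (phi p).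
Proof. by have := phi_strong_min p_prox.1; rewrite local_prox_phiE lee_fin. Qed.

Lemma local_prox_dist :
  sigma * lam * dotp (p - xb) (p - xb) <= dotp (x - xb) (x - xb) /\
  dotp (x - p) (x - p) <= dotp (x - xb) (x - xb).
Proof.
have := local_prox_le_center; have := local_prox_strong_min.
have := dotp_ge0 (p - xb); have := dotp_ge0 (x - p).
rewrite /prox_cost; set A := dotp (p - xb) _; set B := dotp (x - p) _.
set C := dotp (x - xb) _ => B0 A0 sm le_c.
have ilam2 : 0 < (2 * lam)^-1 by rewrite invr_gt0 mulr_gt0.
have sum_le : B + sigma * lam * A <= C.
  rewrite -(ler_pM2r ilam2).
  have -> : (B + sigma * lam * A) / (2 * lam) = B / (2 * lam) + sigma / 2 * A.
    by field; rewrite gt_eqF.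
  by lra.
have : 0 <= sigma * lam * A by rewrite !mulr_ge0 // ltW.
by split; lra.
Qed.

Lemma local_prox_value_ge :
  phi0 + sigma / (1 + lam * sigma) / 2 * dotp (x - xb) (x - xb) <=
  fine (phi p) + prox_cost x p.
Proof.
have -> : x - xb = (p - xb) + (x - p) by rewrite [RHS]addrC addrA subrK.
(* completing the square *)
have := dotp_ge0 (lam * sigma *: (p - xb) - (x - p)).
rewrite (dotp_sqrD (p - xb)) (dotp_sqrD (lam * sigma *: (p - xb))).
rewrite dotp_sqrZ dotpZl !dotpNr dotpNl opprK /prox_cost.
move: local_prox_strong_min.
set A := dotp (p - xb) (p - xb); set B := dotp (x - p) (x - p).
set D := dotp (p - xb) (x - p) => sm square_ge0.
have ls1 : 0 < 1 + lam * sigma by rewrite ltr_wpDr // mulr_ge0 // ltW.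
suff : sigma / (1 + lam * sigma) / 2 * (A + 2 * D + B) <= sigma / 2 * A + B / (2 * lam).
  by lra.
rewrite -subr_ge0.
have -> : sigma / 2 * A + B / (2 * lam) - sigma / (1 + lam * sigma) / 2 * (A + 2 * D + B)
    = ((lam * sigma) ^+ 2 * A + 2 * (lam * sigma * - D) + B) / (2 * lam * (1 + lam * sigma)).
  by field; rewrite !gt_eqF.
by rewrite divr_ge0 // !mulr_ge0 // ltW.
Qed.

Lemma local_prox_reg_subdiff : `|p - xb| < rho ->
  reg_subdiff phi p (lam^-1 *: (x - p)).
Proof.
move=> p_in; split; first by rewrite local_prox_phiE.
move=> eps eps0; exists (Num.min (2 * lam * eps) (rho - `|p - xb|)).
  by rewrite lt_min subr_gt0 p_in andbT !mulr_gt0.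
move=> q; rewrite lt_min => /andP[q_near q_in].
have q_ball : `|q - xb| <= rho.
  have -> : q - xb = (q - p) + (p - xb) by rewrite addrA subrK.
  apply: le_trans (ler_normD _ _) _; rewrite -lerBrDr.
  by apply: ltW; apply: le_lt_trans (normr_le_enorm _) q_in.
have := p_prox.2 q q_ball.
rewrite local_prox_phiE; case: (phi q) (phi_neqNy q) => [r| |] // _; last first.
  by move=> _; rewrite leey.
rewrite -!EFinD !lee_fin /prox_cost.
have -> : x - q = (x - p) + - (q - p) by rewrite opprB addrA subrK.
rewrite (dotp_sqrD (x - p) (- (q - p))) !dotpNr dotpNl opprK dotpZl.
rewrite -[dotp (q - p) (q - p)]enorm_sqr.
set e := enorm (q - p) in q_near *; set B := dotp (x - p) (x - p).
set D := dotp (x - p) (q - p).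
have lam2 : 0 < 2 * lam by rewrite mulr_gt0.
have e_sqr : e ^+ 2 / (2 * lam) <= eps * e.
  rewrite ler_pdivrMr // expr2 [eps * e]mulrC -mulrA ler_wpM2l ?enorm_ge0 //.
  by rewrite mulrC ltW.
have -> : (B + 2 * - D + e ^+ 2) / (2 * lam) =
    B / (2 * lam) - lam^-1 * D + e ^+ 2 / (2 * lam) by field; rewrite gt_eqF.
by lra.
Qed.

End LocalProx.

Section Ray.
Variables (pr : 'rV[R]_n -> 'rV[R]_n) (u : 'rV[R]_n).
Hypothesis pr_prox : forall x, is_local_prox x (pr x).

Let ray t := xb + t *: u.

Definition ray_envelope t := fine (phi (pr (ray t))) + prox_cost (ray t) (pr (ray t)).

Definition ray_slope t := dotp (ray t - pr (ray t)) u / lam.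

Definition ray_rate := Num.sqrt (dotp u u * ((sigma * lam)^-1 + (lam ^+ 2)^-1)).

Lemma ray_subr t : ray t - xb = t *: u.
Proof. by rewrite /ray addrAC subrr add0r. Qed.

Lemma ray_envelope_ge t :
  phi0 + sigma / (1 + lam * sigma) * dotp u u / 2 * t ^+ 2 <= ray_envelope t.
Proof.
have := local_prox_value_ge (pr_prox (ray t)); rewrite ray_subr dotp_sqrZ.
by congr (_ + _ <= _); ring.
Qed.

Lemma ray_envelope_le s : ray_envelope s <= phi0 + dotp u u / lam / 2 * s ^+ 2.
Proof.
have := local_prox_le_center (pr_prox (ray s)).
rewrite {2}/prox_cost ray_subr dotp_sqrZ.
by congr (_ <= _ + _); field; rewrite gt_eqF.
Qed.

Lemma ray_envelope_step t s : ray_envelope s <=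
  ray_envelope t + ray_slope t * (s - t) + dotp u u / lam / 2 * (s - t) ^+ 2.
Proof.
(* pr (ray t) competes in the proximal problem at ray s *)
have := (pr_prox (ray s)).2 _ (pr_prox (ray t)).1.
rewrite (local_prox_phiE (pr_prox (ray s))) (local_prox_phiE (pr_prox (ray t))).
rewrite -!EFinD lee_fin.
have -> : prox_cost (ray s) (pr (ray t)) = prox_cost (ray t) (pr (ray t)) +
    ray_slope t * (s - t) + dotp u u / lam / 2 * (s - t) ^+ 2.
  have -> : ray s = ray t + (s - t) *: u by rewrite /ray -addrA -scalerDl subrKC.
  by rewrite prox_costD dotpZr dotp_sqrZ /ray_slope; field; rewrite gt_eqF.
by rewrite !addrA.
Qed.

Lemma ray_large_slope eps T : 0 < eps -> 0 < T -> exists2 t, 0 < t /\ t <= T &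
  (sigma / (1 + lam * sigma) * dotp u u - eps) * t <= ray_slope t.
Proof.
apply: exists_large_slope => [t _|t s _ _|s _].
- exact: ray_envelope_ge.
- exact: ray_envelope_step.
- exact: ray_envelope_le.
Qed.

Lemma ray_prox_pair_dist t : 0 <= t ->
  Num.sqrt (dotp (pr (ray t) - xb) (pr (ray t) - xb) +
            dotp (lam^-1 *: (ray t - pr (ray t))) (lam^-1 *: (ray t - pr (ray t)))) <=
  t * ray_rate.
Proof.
move=> t0; have [] := local_prox_dist (pr_prox (ray t)).
rewrite ray_subr dotp_sqrZ dotp_sqrZ => A_le B_le.
rewrite -[X in _ <= X * _](ger0_norm t0) -sqrtr_sqr -sqrtrM ?exprn_ge0 // ler_wsqrtr //.
have sl0 : 0 < sigma * lam by rewrite mulr_gt0.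
rewrite mulrA mulrDr; apply: lerD.
  by rewrite ler_pdivlMr // mulrC.
by rewrite mulrC exprVn ler_wpM2r // invr_ge0 exprn_ge0 // ltW.
Qed.

Lemma ray_prox_lim_subdiff t : 0 <= t -> t * ray_rate < rho ->
  lim_subdiff phi (pr (ray t)) (lam^-1 *: (ray t - pr (ray t))).
Proof.
move=> t0 tK_rho; apply/reg_subdiff_lim_subdiff/local_prox_reg_subdiff => //.
apply: le_lt_trans (normr_le_enorm _) _; apply: le_lt_trans tK_rho.
apply: le_trans (ray_prox_pair_dist t0).
by rewrite ler_wsqrtr // lerDl dotp_ge0.
Qed.

End Ray.

Section Coderivative.
Variables (w z : 'rV[R]_n).
Hypothesis z_coderiv : forall eps, 0 < eps -> exists2 d, 0 < d & forall x y,
  lim_subdiff phi x y ->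
  Num.sqrt (dotp (x - xb) (x - xb) + dotp (y - 0) (y - 0)) < d ->
  dotp z (x - xb) + dotp (- w) (y - 0) <=
    eps * Num.sqrt (dotp (x - xb) (x - xb) + dotp (y - 0) (y - 0)).

Let u := - (w + lam *: z).

Lemma coderiv_pairing_ray t p : dotp z (p - xb) + dotp (- w) (lam^-1 *: (xb + t *: u - p)) =
  t * dotp z u + dotp (xb + t *: u - p) u / lam.
Proof.
set y := xb + t *: u - p.
have -> : p - xb = t *: u - y.
  by rewrite /y (addrAC xb) opprD addrCA subrr addr0 opprB.
clearbody y.
rewrite dotpBr !dotpZr dotpNl /u !dotpNr !dotpDr !dotpZr (dotpC y w) (dotpC y z).
by field; rewrite gt_eqF.
Qed.

Lemma local_prox_coderiv_bound :
  sigma / (1 + lam * sigma) * dotp (w + lam *: z) (w + lam *: z) <=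
  dotp z w + lam * dotp z z.
Proof.
have /choice [pr pr_prox] := exists_local_prox.
have -> : dotp (w + lam *: z) (w + lam *: z) = dotp u u by rewrite dotpNl dotpNr opprK.
apply/ler_addgt0Pr => eps eps0.
pose K := ray_rate u.
have K1 : 0 < K + 1 by rewrite ltr_wpDl ?sqrtr_ge0.
pose eta := eps / 2 / (K + 1).
have eta0 : 0 < eta by rewrite !divr_gt0.
have [d d0 d_coderiv] := z_coderiv eta0.
have md0 : 0 < Num.min d rho by rewrite lt_min d0.
have [t [t0 tT] slope_ge] := @ray_large_slope pr u pr_prox (eps / 2)
  (Num.min d rho / (K + 1)) (divr_gt0 eps0 (ltr0n _ 2)) (divr_gt0 md0 K1).
have := @ray_prox_pair_dist pr u pr_prox t (ltW t0).
set S := Num.sqrt _ => S_le.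
have /andP[tK_d tK_rho] : (t * K < d) && (t * K < rho).
  rewrite -lt_min; rewrite ler_pdivlMr // in tT; apply: lt_le_trans tT.
  by rewrite ltr_pM2l // ltrDl.
have := d_coderiv _ _ (ray_prox_lim_subdiff pr_prox (ltW t0) tK_rho).
rewrite !subr0 => /(_ (le_lt_trans S_le tK_d)).
rewrite coderiv_pairing_ray => pairing_le.
have {}pairing_le : t * dotp z u + ray_slope pr u t <= eta * S := pairing_le.
have etaK : eta * K <= eps / 2.
  by rewrite /eta mulrAC ler_pdivrMr // ler_wpM2l ?divr_ge0 ?ltW // ltrDl.
have etaS_le : eta * S <= t * (eps / 2).
  apply: le_trans (ler_wpM2l (ltW eta0) S_le) _.
  by rewrite mulrCA ler_wpM2l // ltW.
have : t * (sigma / (1 + lam * sigma) * dotp u u + dotp z u - eps) <= 0.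
  by lra.
have -> : dotp z u = - (dotp z w + lam * dotp z z) by rewrite /u dotpNr dotpDr dotpZr.
by rewrite pmulr_rle0 //; lra.
Qed.

End Coderivative.
End LocalMoreauEnvelope.

Lemma coderiv_bound_lim0 (R : realType) (n : nat) (sigma : R) (w z : 'rV[R]_n) :
  0 < sigma ->
  (forall lam, 0 < lam -> sigma / (1 + lam * sigma) * dotp (w + lam *: z) (w + lam *: z)
     <= dotp z w + lam * dotp z z) ->
  sigma * dotp w w <= dotp z w.
Proof.
move=> sigma0 bound; set W := dotp w w; set c := dotp z w; set s := dotp z z.
have lin_bound lam : 0 < lam -> sigma * W - c <= lam * (s - sigma * c).
  move=> lam0; have := bound lam lam0.
  rewrite dotp_sqrD dotpZr dotp_sqrZ (dotpC w z) -/W -/c -/s.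
  have ls1 : 0 < 1 + lam * sigma by rewrite ltr_wpDr // mulr_ge0 // ltW.
  rewrite mulrAC ler_pdivrMr //.
  by nra.
rewrite -subr_le0; apply/ler_addgt0Pr => e e0; rewrite add0r.
have K1 : 0 < `|s - sigma * c| + 1 by rewrite ltr_wpDl.
pose lam := e / (`|s - sigma * c| + 1).
have lam0 : 0 < lam by rewrite divr_gt0.
apply: le_trans (lin_bound lam lam0) _.
apply: le_trans (ler_wpM2l (ltW lam0) (ler_norm _)) _.
by rewrite /lam mulrAC ler_pdivrMr // ler_pM2l // lerDl.
Qed.

Lemma strong_local_min_lsc_mx_ball (R : realType) (n : nat) (phi : 'rV[R]_n -> \bar R)
    (xb : 'rV[R]_n) (sigma : R) :
  strong_local_min phi xb sigma -> locally_lsc phi xb ->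
  exists2 rho, 0 < rho & forall q, `|q - xb| <= rho ->
    ((fine (phi xb) + sigma / 2 * dotp (q - xb) (q - xb))%:E <= phi q)%E /\ lsc_at phi q.
Proof.
move=> [phi_fin [d0 d0_gt0 phi_min]] [d1 d1_gt0 phi_lsc].
have [|rho rho0 small] := @mx_ball_sub_enorm_ball R n (Num.min d0 d1).
  by rewrite lt_min d0_gt0.
exists rho => // q /small; rewrite lt_min => /andP[q_d0 q_d1]; split.
  by rewrite EFinD fineK // -enorm_sqr; exact: phi_min.
exact: phi_lsc.
Qed.

Unset Implicit Arguments. Set Strict Implicit.

Theorem theorem6p3 (R : realType) (n : nat) (phi : 'rV[R]_n -> \bar R)
  (xb : 'rV[R]_n) (sigma : R) :
  (forall x, phi x != -oo%E) ->
  lim_subdiff phi xb 0 ->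
  prox_regular phi xb 0 ->
  0 < sigma ->
  strong_local_min phi xb sigma ->
  (forall w z, breve_subdiff2 phi xb 0 w z -> sigma * enorm w ^+ 2 <= dotp z w) /\
  (forall w z, w != 0 -> breve_subdiff2 phi xb 0 w z -> 0 < dotp z w).
Proof.
move=> phi_neqNy _ [phi_fin [phi_lsc _]] sigma0 phi_min.
have [rho rho0 near_xb] := strong_local_min_lsc_mx_ball phi_min phi_lsc.
have coderiv_ge w z : breve_subdiff2 phi xb 0 w z -> sigma * enorm w ^+ 2 <= dotp z w.
  move=> [_ z_coderiv]; rewrite enorm_sqr; apply: coderiv_bound_lim0 => // lam lam0.
  apply: (@local_prox_coderiv_bound _ _ _ _ (fine (phi xb)) _ rho) z_coderiv => //.
  - by rewrite fineK.
  - by move=> q /near_xb[].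
  - by move=> q /near_xb[].
split=> // w z w0 /coderiv_ge; apply: lt_le_trans.
by rewrite mulr_gt0 // exprn_gt0 // enorm_gt0.
Qed.
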